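(* For all integers $n\ge k\ge1$, there exists a monotone $(n-k)$-admissible $k$-CNF formula $F$ on $n$ variables with $|\mathrm{sat}_{n-k}(F)|=S(n,n-k,k)$.
   Context: A $k$-CNF formula is a conjunction of clauses (disjunctions of literals) each of width at most $k$; it is monotone if no literal is negated. $\mathrm{sat}_t(F)$ is the set of satisfying assignments of Hamming weight exactly $t$; $F$ is $t$-admissible if it has no satisfying assignment of Hamming weight less than $t$; $S(n,t,k)$ is the maximum of $|\mathrm{sat}_t(F)|$ over all $t$-admissible $k$-CNF formulas $F$ on $n$ variables. *)

From mathcomp Require Import all_boot.
Set Implicit Arguments. Unset Strict Implicit. Unset Printing Implicit Defensive.

(* A literal is a pair (i, b): b = true is the positive
   literal x_i, b = false the negated literal ~x_i.  A clause is a finite set of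
   literals (a disjunction); a CNF formula is a finite set of clauses (a
   conjunction).  An assignment is the set of variables set to true, so its
   Hamming weight is its cardinality. *)
Definition literal (n : nat) := ('I_n * bool)%type.
Definition clause (n : nat) := {set literal n}.
Definition cnf (n : nat) := {set clause n}.
Definition assignment (n : nat) := {set 'I_n}.

Definition lit_sat n (a : assignment n) (l : literal n) : bool :=
  (l.1 \in a) == l.2.
Definition clause_sat n (a : assignment n) (C : clause n) : bool :=
  [exists l in C, lit_sat a l].
Definition cnf_sat n (a : assignment n) (F : cnf n) : bool :=
  [forall C in F, clause_sat a C].

Definition is_kcnf n (k : nat) (F : cnf n) : bool :=
  [forall C in F, #|C| <= k].

Definition monotone n (F : cnf n) : bool :=
  [forall C in F, [forall l in C, l.2]].

Definition sat_t n (t : nat) (F : cnf n) : {set assignment n} :=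
  [set a : assignment n | (#|a| == t) && cnf_sat a F].

Definition admissible n (t : nat) (F : cnf n) : bool :=
  [forall a : assignment n, (#|a| < t) ==> ~~ cnf_sat a F].

Definition S (n t k : nat) : nat :=
  \max_(F : cnf n | is_kcnf k F && admissible t F) #|sat_t t F|.

From mathcomp Require Import all_boot.
From mathcomp Require Import zify.
Set Implicit Arguments. Unset Strict Implicit. Unset Printing Implicit Defensive.

(* Let F be an extremal (n-k)-admissible k-CNF and let G be the monotone formula
   with one clause "some variable outside b is true" for each assignment b of
   weight n - k falsifying F; these clauses have width k.  G has the same
   weight-(n-k) models as F.  It is (n-k)-admissible because a lighter
   assignment a falsifying F extends to a weight-(n-k) superset b still
   falsifying F: a falsified clause of width at most k leaves some unset
   variable outside it, and setting that variable keeps the clause falsified.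
   Then a is contained in b and violates the clause of b. *)

Section Forbidding.
Variable n : nat.

Definition cover_clause (b : assignment n) : clause n :=
  [set (j, true) | j in ~: b].

Lemma cover_clause_sat (a b : assignment n) :
  clause_sat a (cover_clause b) = ~~ (a \subset b).
Proof.
apply/existsP/subsetPn.
  case=> l /andP [/imsetP [j jb ->]]; rewrite /lit_sat /= eqb_id => ja.
  by exists j => //; rewrite inE in jb.
case=> j ja jb; exists (j, true); rewrite /lit_sat /= eqb_id ja andbT.
by apply/imsetP; exists j; rewrite ?inE.
Qed.

Lemma card_cover_clause (b : assignment n) : #|cover_clause b| = n - #|b|.
Proof.
rewrite card_imset; last by move=> x y [].
by have := cardsC b; rewrite card_ord; lia.
Qed.

Definition forbid_cnf (B : {set assignment n}) : cnf n :=
  cover_clause @: B.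

Lemma monotone_forbid_cnf (B : {set assignment n}) : monotone (forbid_cnf B).
Proof.
apply/forallP => C; apply/implyP => /imsetP [b _ ->].
by apply/forallP => l; apply/implyP => /imsetP [j _ ->].
Qed.

Lemma forbid_cnf_sat (B : {set assignment n}) (a : assignment n) :
  cnf_sat a (forbid_cnf B) = [forall b in B, ~~ (a \subset b)].
Proof.
apply/forallP/forallP => h b; apply/implyP.
  by move=> bB; rewrite -cover_clause_sat; apply: (implyP (h _)); apply: imset_f.
by case/imsetP=> c cB ->; rewrite cover_clause_sat; apply: (implyP (h c)).
Qed.

Definition unsat_t (t : nat) (F : cnf n) : {set assignment n} :=
  [set b : assignment n | (#|b| == t) && ~~ cnf_sat b F].

Lemma sat_t_forbid_unsat_t (t : nat) (F : cnf n) :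
  sat_t t (forbid_cnf (unsat_t t F)) = sat_t t F.
Proof.
apply/setP => a; rewrite !inE forbid_cnf_sat.
case: eqP => //= ca; apply/forallP/idP => [h | aF b].
  by apply/negPn/negP => naF; have := h a; rewrite inE ca eqxx naF subxx.
rewrite inE; apply/implyP => /andP [/eqP cb nbF]; apply/negP => sab.
have /eqP eab : a == b by rewrite eqEcard sab cb ca /=.
by move: nbF; rewrite -eab aF.
Qed.

Lemma kcnf_forbid_unsat_t (t : nat) (F : cnf n) :
  is_kcnf (n - t) (forbid_cnf (unsat_t t F)).
Proof.
apply/forallP => C; apply/implyP.
by case/imsetP=> b; rewrite inE => /andP [/eqP cb _] ->; rewrite card_cover_clause cb.
Qed.

End Forbidding.

Section Extension.
Variables (n k : nat) (F : cnf n).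
Hypothesis kF : is_kcnf k F.

Lemma unsat_add_var (a : assignment n) :
  ~~ cnf_sat a F -> k < #|~: a| ->
  exists2 i, i \notin a & ~~ cnf_sat (i |: a) F.
Proof.
case/forallPn=> C; rewrite negb_imply => /andP [CF /existsPn nC] ka.
have wC : #|C| <= k by apply: (implyP (forallP kF C)).
have : ~~ (~: a \subset [set l.1 | l in C]).
  apply/negP => /subset_leq_card sub.
  have := leq_trans (leq_trans sub (leq_imset_card _ _)) wC.
  by rewrite leqNgt ka.
case/subsetPn=> i; rewrite inE => ia iC; exists i => //.
apply/forallPn; exists C; rewrite CF /=; apply/existsPn => l.
apply/negP => /andP [lC]; have li : l.1 != i.
  by apply: contraNneq iC => <-; apply: imset_f.
by have := nC l; rewrite lC /lit_sat in_setU1 (negbTE li) => /negP.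
Qed.

Lemma unsat_extend (t : nat) (a : assignment n) :
  ~~ cnf_sat a F -> #|a| <= t -> t + k <= n ->
  exists2 b : assignment n, a \subset b & b \in unsat_t t F.
Proof.
move=> naF; elim: t => [|t IH] a_le tkn.
  by exists a; rewrite ?inE // naF andbT; lia.
case: (ltngtP #|a| t.+1) a_le => [a_lt | // | ea]; last first.
  by exists a; rewrite ?inE // ea eqxx.
have [b ab] := IH a_lt (ltnW tkn); rewrite inE => /andP [/eqP cb nbF].
have kb : k < #|~: b| by have := cardsC b; rewrite card_ord; lia.
have [i ib niF] := unsat_add_var nbF kb.
exists (i |: b); first exact: subset_trans ab (subsetUr _ _).
by rewrite inE cardsU1 ib cb eqxx.
Qed.

Lemma admissible_forbid_unsat_t (t : nat) :
  admissible t F -> t + k <= n -> admissible t (forbid_cnf (unsat_t t F)).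
Proof.
move=> aF tkn; apply/forallP => a; apply/implyP => a_lt.
have naF : ~~ cnf_sat a F by apply: (implyP (forallP aF a)).
have [b ab bU] := unsat_extend naF (ltnW a_lt) tkn.
by rewrite forbid_cnf_sat; apply/forallPn; exists b; rewrite bU ab.
Qed.

End Extension.

(* The contradictory formula, made of the empty clause, witnesses that the
   maximum defining [S] ranges over a nonempty set. *)
Lemma S_attained (n t k : nat) :
  exists2 F : cnf n, is_kcnf k F && admissible t F & #|sat_t t F| = S n t k.
Proof.
have : 0 < #|[pred F : cnf n | is_kcnf k F && admissible t F]|.
  apply/card_gt0P; exists [set set0]; rewrite inE; apply/andP; split.
    by apply/forallP => C; rewrite inE; apply/implyP => /eqP ->; rewrite cards0.
  apply/forallP => a; apply/implyP => _; apply/forallPn; exists set0.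
  by rewrite inE eqxx /=; apply/existsPn => l; rewrite inE.
by case/(eq_bigmax_cond (fun F : cnf n => #|sat_t t F|)) => F; exists F.
Qed.

Theorem lemma5 (n k : nat) (hk : 1 <= k) (hkn : k <= n) :
  exists F : cnf n,
    [/\ monotone F, is_kcnf k F, admissible (n - k) F
      & #|sat_t (n - k) F| = S n (n - k) k].
Proof.
(* The construction also works for k = 0. *)
have tkn : n - k + k = n by rewrite subnK.
have [F0 /andP [kF0 aF0] maxF0] := S_attained n (n - k) k.
exists (forbid_cnf (unsat_t (n - k) F0)); split.
- exact: monotone_forbid_cnf.
- by rewrite -{1}(subKn hkn); apply: kcnf_forbid_unsat_t.
- by apply: (admissible_forbid_unsat_t kF0 aF0); rewrite tkn.
- by rewrite sat_t_forbid_unsat_t maxF0.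
Qed.
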